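(* Let $\Gamma$ be a finite connected tetravalent $G$-half-arc-transitive graph for some $G\le\mathrm{Aut}(\Gamma)$ with $\mathrm{rad}_G(\Gamma)=3$ and $\mathrm{att}_G(\Gamma)=2$, and let $\Lambda=\mathrm{Alt}_G(\Gamma)$. Then the group $G$ induces an action on $\Lambda$ which is transitive on the $2$-arcs of $\Lambda$, and $\mathrm{Dart}(\Lambda)\cong\Gamma$. In fact, there is an isomorphism $\Psi\colon\mathrm{Dart}(\Lambda)\to\Gamma$ mapping the natural orientation of $\mathrm{Dart}(\Lambda)$ to one of the two $G$-induced orientations of $\Gamma$.
   Context: All graphs are finite and simple. For a tetravalent graph $\Gamma$ and $G\le \mathrm{Aut}(\Gamma)$, $\Gamma$ is $G$-half-arc-transitive if $G$ acts transitively on vertices and edges but not on arcs; then the two $G$-orbits on arcs give two paired ($G$-induced) orientations of the edges, and each vertex is the tail of two and head of two incident edges. A $G$-alternating cycle is a cycle in which every two consecutive edges have a common head or a common tail. All have length $2\,\mathrm{rad}_G(\Gamma)$, and any two sharing a vertex meet in $\mathrm{att}_G(\Gamma)$ vertices. $\mathrm{Alt}_G(\Gamma)$ is the graph whose vertices are the $G$-alternating cycles, two adjacent iff they share a vertex; $G$ acts on it naturally. A $2$-arc is a walk $(x,y,z)$ with $x\ne z$. For a cubic graph $\Lambda$, $\mathrm{Dart}(\Lambda)$ has as vertices the arcs of $\Lambda$, with $(u,v)$ adjacent to $(u',v')$ iff either $u'=v$ and $u\neq v'$, or $u=v'$ and $u'\neq v$; its natural orientation orients the edge $(u,v)(v,w)$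 from $(u,v)$ to $(v,w)$. *)

From mathcomp Require Import all_boot fingroup perm.
From mathcomp Require Import boolp.

Set Implicit Arguments.
Unset Strict Implicit.
Unset Printing Implicit Defensive.

Section Defs.
Variable T : finType.

(* A simple graph is a symmetric irreflexive relation e on T. *)

Definition is_aut_group (e : rel T) (G : {group {perm T}}) : Prop :=
  forall g, g \in G -> forall x y, e (g x) (g y) = e x y.

Definition tetravalent (e : rel T) : Prop := forall x, #|[set y | e x y]| = 4.

Definition connected_graph (e : rel T) : Prop := forall x y, connect e x y.

Definition half_arc_transitive (e : rel T) (G : {group {perm T}}) : Prop :=
  [/\ (forall x y, exists2 g, g \in G & g x = y),
      (forall x y u v, e x y -> e u v ->
         exists2 g, g \in G & [set g x; g y] = [set u; v])
    & ~ (forall x y u v, e x y -> e u v ->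
         exists2 g, g \in G & (g x = u /\ g y = v))].

(* The G-orbit of the arc (x0, y0): the G-induced orientation containing it;
   O u v means the edge uv is oriented from u (tail) to v (head). *)
Definition arc_orbit (G : {group {perm T}}) (x0 y0 : T) : rel T :=
  fun u v => [exists g in G, (g x0 == u) && (g y0 == v)].

(* the cyclic sequence s (read as a cycle) is O-alternating: at each vertex,
   the two incident cycle edges have a common head or a common tail *)
Definition alternating (O : rel T) (s : seq T) : bool :=
  all (fun x => (O (prev s x) x && O (next s x) x)
             || (O x (prev s x) && O x (next s x))) s.

Definition cycle_edges (s : seq T) : {set {set T}} :=
  [set [set x; next s x] | x in s].

Definition alt_cycle (e : rel T) (O : rel T) (C : {set {set T}}) : Prop :=
  exists s : seq T,
    [/\ uniq s, 3 <= size s, path.cycle e s, alternating O s & C = cycle_edges s].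

Definition alt_cycleb (e : rel T) (O : rel T) (C : {set {set T}}) : bool :=
  `[< alt_cycle e O C >].

Definition cycle_verts (C : {set {set T}}) : {set T} := cover C.

(* adjacency in Alt_G(Gamma): distinct cycles sharing a vertex *)
Definition alt_adj (C D : {set {set T}}) : bool :=
  (C != D) && (cycle_verts C :&: cycle_verts D != set0).

Definition act_cycle (g : {perm T}) (C : {set {set T}}) : {set {set T}} :=
  [set g @: E | E : {set T} in C].

Definition AltV (e O : rel T) := {C : {set {set T}} | alt_cycleb e O C}.

Definition alt_rel (e O : rel T) : rel (AltV e O) :=
  fun C D => alt_adj (val C) (val D).

End Defs.
Arguments alt_rel {T} e O.
Arguments AltV {T} e O.

Section Dart.
Variables (L : finType) (r : rel L).

Definition DartV := {p : L * L | r p.1 p.2}.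

Definition dart_adj : rel DartV :=
  fun a b => let: (u, v) := val a in let: (u', v') := val b in
    ((u' == v) && (u != v')) || ((u == v') && (u' != v)).

Definition dart_arc : rel DartV :=
  fun a b => let: (u, v) := val a in let: (u', w) := val b in
    (u' == v) && (u != w).

End Dart.

(* Let O be the G-induced orientation; every vertex has in- and out-degree 2.
   Alternately replacing the tail and the head of an arc by the other neighbour
   walks along the unique O-alternating cycle through that arc; since rad = 3
   the walk closes after three steps, and every vertex v is a double tail on one
   alternating cycle C+(v) and a double head on another one C-(v).  As att = 2,
   C+(v) and C-(v) meet exactly in v and in the vertex opposite to v on C+(v),
   which is a head there.  Hence O u v holds iff C+(u) = C-(v) and
   C+(v) <> C-(u): the map v |-> (C+(v), C-(v)) is an isomorphism from Gamma
   onto Dart(Lambda) reversing the natural orientation, and the transitivity of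
   G on O-arcs becomes transitivity on the 2-arcs of Lambda. *)

From mathcomp Require Import all_boot fingroup perm.
From mathcomp Require Import boolp.

Set Implicit Arguments.
Unset Strict Implicit.
Unset Printing Implicit Defensive.

Lemma prev_neq_next (V : eqType) (s : seq V) x :
  uniq s -> 3 <= size s -> x \in s -> prev s x != next s x.
Proof.
move=> us ss /rot_to [i s' rs].
rewrite -(prev_rot i us) -(next_rot i us) rs.
have := rot_uniq i s; rewrite us rs.
have : 3 <= size (x :: s') by rewrite -rs size_rot.
case: s' {rs} => [|y [|z r]] // _ urot; apply/eqP => E.
have : next [:: x, y, z & r] (next [:: x, y, z & r] x) = x by rewrite -{1}E next_prev.
move: urot; rewrite /= !inE !eqxx => /and3P [/norP [xy /norP [xz _]] /norP [yz _] _].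
by rewrite eq_sym (negbTE xy) => zx; rewrite zx eqxx in xz.
Qed.

Section Interleave.
Variables (A V : eqType) (f g : A -> V).

Definition interleave (s : seq A) : seq V := flatten [seq [:: f a; g a] | a <- s].

Lemma mem_interleave v s :
  (v \in interleave s) = has (fun a => (v == f a) || (v == g a)) s.
Proof. by elim: s => //= a s IH; rewrite !inE -IH orbA. Qed.

Lemma size_interleave s : size (interleave s) = (size s).*2.
Proof. by elim: s => //= a s ->; rewrite doubleS. Qed.

Lemma interleave_uniq s : uniq s ->
    {in s &, injective f} -> {in s &, injective g} ->
    {in s &, forall a b, f a != g b} -> uniq (interleave s).
Proof.
elim: s => //= a s IH /andP [a_s us] injf injg fg.
have sub : {subset s <= a :: s} by move=> b bs; rewrite inE bs orbT.
rewrite -/(interleave s) (IH us (sub_in2 sub injf) (sub_in2 sub injg) (sub_in2 sub fg)).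
rewrite andbT inE negb_or fg ?mem_head //= !mem_interleave.
have neq_a b : b \in s -> a != b by apply: contraTneq => <-.
have in_cons b : b \in s -> a \in a :: s /\ b \in a :: s by move=> bs; rewrite mem_head sub.
apply/andP; split; apply/hasPn => b bs; have [aD bD] := in_cons b bs; rewrite negb_or.
- rewrite (fg a b aD bD) andbT; apply: contra (neq_a b bs).
  by move=> /eqP /(injf a b aD bD) ->.
- rewrite eq_sym (fg b a bD aD) /=; apply: contra (neq_a b bs).
  by move=> /eqP /(injg a b aD bD) ->.
Qed.

Lemma path_interleave (r : rel A) (E : rel V) (D : {pred A}) a s :
    {in D, forall b, E (f b) (g b)} ->
    {in D, forall b c, r b c -> E (g b) (f c)} ->
    a \in D -> all [in D] s -> path r a s -> path E (g a) (interleave s).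
Proof.
move=> Efg Egf; elim: s a => //= b s IH a aD /andP [bD sD] /andP [rab rs].
by rewrite Egf // Efg // IH.
Qed.

Lemma cycle_interleave (r : rel A) (E : rel V) s :
    {in s, forall a, E (f a) (g a)} ->
    {in s, forall a b, r a b -> E (g a) (f b)} ->
    path.cycle r s -> path.cycle E (interleave s).
Proof.
case: s => //= a s Efg Egf.
have sD : all [in a :: s] (rcons s a) by apply/allP => b; rewrite mem_rcons.
move=> /(path_interleave Efg Egf (mem_head a s) sD).
rewrite /interleave map_rcons flatten_rcons cat_path /= => /andP [P1 /andP [E1 _]].
by rewrite Efg ?mem_head //= rcons_path P1.
Qed.

End Interleave.

Section FiniteSets.
Variable T : finType.

Lemma set2_eq_cases (a b c d : T) : [set a; b] = [set c; d] ->
  (a = c /\ b = d) \/ (a = d /\ b = c).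
Proof.
move=> E.
have /set2P ha : a \in [set c; d] by rewrite -E set21.
have /set2P hb : b \in [set c; d] by rewrite -E set22.
have /set2P hc : c \in [set a; b] by rewrite E set21.
have /set2P hd : d \in [set a; b] by rewrite E set22.
by case: ha => ?; case: hb => ?; case: hc => ?; case: hd => ?; subst; auto.
Qed.

Lemma card2_other (A : {set T}) a : #|A| = 2 -> a \in A ->
  exists2 b, b != a & A = [set a; b].
Proof.
move=> cA aA; have /cards1P [b Ab] : #|A :\ a| == 1.
  by move: cA; rewrite (cardsD1 a) aA add1n => -[->].
have /setD1P [ba _] : b \in A :\ a by rewrite Ab set11.
by exists b; rewrite // -[LHS](setD1K aA) Ab.
Qed.

Lemma card3_third (A : {set T}) a b : #|A| = 3 -> a \in A -> b \in A -> b != a ->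
  exists2 c, c \notin [set a; b] & A = c |: [set a; b].
Proof.
move=> cA aA bA ba; have sub : [set a; b] \subset A by rewrite subUset !sub1set aA bA.
have /cards1P [c Ac] : #|A :\: [set a; b]| == 1.
  by rewrite cardsD (setIidPr sub) cA cards2 [a == b]eq_sym ba.
have /setDP [_ cab] : c \in A :\: [set a; b] by rewrite Ac set11.
exists c => //; apply/setP => x; rewrite in_setU1.
case: (boolP (x \in [set a; b])) => xab; first by rewrite orbT (subsetP sub).
by rewrite orbF -(in_set1 x c) -Ac in_setD xab.
Qed.

Lemma card_out_eq_in (r : rel T) x0 :
    (forall x, #|[set y | r x y]| = #|[set y | r x0 y]|) ->
    (forall x, #|[set y | r y x]| = #|[set y | r y x0]|) ->
  #|[set y | r x0 y]| = #|[set y | r y x0]|.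
Proof.
move=> out_const in_const.
have card_sum (P : pred T) : #|[set y | P y]| = \sum_y P y.
  by rewrite -sum1dep_card big_mkcond.
have : \sum_x #|[set y | r x y]| = \sum_x #|[set y | r y x]|.
  under eq_bigr do rewrite card_sum; under [RHS]eq_bigr do rewrite card_sum.
  exact: exchange_big.
under eq_bigr do rewrite out_const; under [in RHS]eq_bigr do rewrite in_const.
rewrite !sum_nat_const => /eqP; rewrite eqn_pmul2l; first by move/eqP.
by apply/card_gt0P; exists x0.
Qed.

Lemma card_rel_perm (r : rel T) (g : {perm T}) x :
  {mono g : u v / r u v} -> #|[set y | r (g x) y]| = #|[set y | r x y]|.
Proof.
move=> rg; rewrite -(card_preimset _ (@perm_inj _ g)); apply: eq_card => y.
by rewrite !inE rg.
Qed.

End FiniteSets.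

Section CycleEdges.
Variable T : finType.
Implicit Types (s : seq T) (C : {set {set T}}).

Lemma mem_cycle_edges s E :
  reflect (exists2 x, x \in s & E = [set x; next s x]) (E \in cycle_edges s).
Proof. exact: imsetP. Qed.

Lemma cycle_edges_next s x : x \in s -> [set x; next s x] \in cycle_edges s.
Proof. by move=> xs; apply/mem_cycle_edges; exists x. Qed.

Lemma cycle_edges_prev s x : uniq s -> x \in s -> [set x; prev s x] \in cycle_edges s.
Proof.
move=> us xs; apply/mem_cycle_edges.
by exists (prev s x); rewrite ?mem_prev // next_prev // setUC.
Qed.

Lemma cover_cycle_edges s : cycle_verts (cycle_edges s) = [set x in s].
Proof.
apply/setP => z; rewrite inE; apply/bigcupP/idP => [[E /mem_cycle_edges [x xs ->]]|zs].
  by case/set2P=> ->; rewrite ?mem_next.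
by exists [set z; next s z]; rewrite ?cycle_edges_next ?set21.
Qed.

Lemma card_cycle_edges s : uniq s -> 3 <= size s -> #|cycle_edges s| = size s.
Proof.
move=> us ss; rewrite card_in_imset; first exact/card_uniqP.
move=> x y xs ys /set2_eq_cases [[] //|[Exy Enext]].
have : prev s x = next s x by rewrite Enext {1}Exy prev_next.
by move/eqP; rewrite (negbTE (prev_neq_next us ss xs)).
Qed.

Lemma act_cycle_edges (g : {perm T}) s : uniq s ->
  act_cycle g (cycle_edges s) = cycle_edges (map g s).
Proof.
move=> us; have next_g := next_map (@perm_inj _ g) us.
apply/setP => E; apply/imsetP/mem_cycle_edges.
- case=> F /mem_cycle_edges [x xs ->] ->.
  by exists (g x); rewrite ?map_f // next_g imsetU1 imset_set1.
- case=> y /mapP [x xs ->] ->; exists [set x; next s x]; first exact: cycle_edges_next.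
  by rewrite next_g imsetU1 imset_set1.
Qed.

Lemma cycle_verts_act (g : {perm T}) C : cycle_verts (act_cycle g C) = g @: cycle_verts C.
Proof.
apply/setP => z; apply/bigcupP/imsetP.
- case=> F /imsetP [E EC ->] /imsetP [x xE ->].
  by exists x => //; apply/bigcupP; exists E.
- case=> x /bigcupP [E EC xE] ->.
  by exists (g @: E); apply: imset_f.
Qed.

Lemma alt_cycle_act (e O : rel T) (g : {perm T}) C :
    {mono g : u v / e u v} -> {mono g : u v / O u v} ->
  alt_cycle e O C -> alt_cycle e O (act_cycle g C).
Proof.
move=> eg Og [s [us ss cs alt ->]]; have g_inj := @perm_inj _ g.
exists (map g s); split; rewrite ?size_map ?act_cycle_edges //.
- by rewrite map_inj_uniq.
- by rewrite cycle_map; apply: sub_cycle cs => x y /=; rewrite eg.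
- apply/allP => _ /mapP [x xs ->].
  by rewrite (next_map g_inj us) (prev_map g_inj us) !Og; apply: (allP alt).
Qed.

Lemma alt_cycle_vertex_edge (e O : rel T) C x : symmetric e ->
  alt_cycle e O C -> x \in cycle_verts C -> exists2 y, e x y & [set x; y] \in C.
Proof.
move=> e_sym [s [_ _ cs _ ->]] /bigcupP [E /mem_cycle_edges [z zs ->]].
have ez := next_cycle cs zs.
case/set2P => ->; first by exists (next s z); rewrite ?cycle_edges_next.
by exists z; rewrite 1?e_sym // setUC cycle_edges_next.
Qed.

Lemma alternating_other_neighbour (O : rel T) s x y : uniq s -> 3 <= size s ->
    alternating O s -> [set x; y] \in cycle_edges s ->
  exists2 w, w != y &
    [set x; w] \in cycle_edges s /\ (O y x && O w x || O x y && O x w).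
Proof.
move=> us ss alt /mem_cycle_edges [z zs /set2_eq_cases Exy].
have [xs [->|->]] : x \in s /\ (y = next s x \/ y = prev s x).
  by case: Exy => -[-> ->]; rewrite ?mem_next ?prev_next; auto.
- exists (prev s x); first by rewrite prev_neq_next.
  by rewrite cycle_edges_prev //; move/allP: alt => /(_ x xs); rewrite andbC [O x _ && _]andbC.
- exists (next s x); first by rewrite eq_sym prev_neq_next.
  by rewrite cycle_edges_next //; move/allP: alt => /(_ x xs).
Qed.

End CycleEdges.

Section OtherNeighbour.
Variables (T : finType) (r : rel T).
Hypothesis r_deg2 : forall t, #|[set w | r t w]| = 2.

Definition other t h := odflt h [pick w | r t w && (w != h)].

Lemma other_spec t h : r t h ->
  other t h != h /\ [set w | r t w] = [set h; other t h].
Proof.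
move=> th; have hN : h \in [set w | r t w] by rewrite inE.
have [b bh Eb] := card2_other (r_deg2 t) hN.
suff -> : other t h = b by [].
rewrite /other; case: pickP => [w /andP [tw wh]|none] /=.
  by move: tw; rewrite -(in_set (r t)) Eb => /set2P [wE|//]; rewrite wE eqxx in wh.
by have := none b; rewrite -(in_set (r t)) Eb set22 bh.
Qed.

Lemma other_neq t h : r t h -> other t h != h.
Proof. by case/other_spec. Qed.

Lemma other_cases t h w : r t h -> r t w -> w = h \/ w = other t h.
Proof. by move=> /other_spec [_ E] tw; apply/set2P; rewrite -E inE. Qed.

Lemma other_rel t h : r t h -> r t (other t h).
Proof. by move=> /other_spec [_ E]; rewrite -(in_set (r t)) E set22. Qed.

Lemma other_eq t h w : r t h -> r t w -> w != h -> w = other t h.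
Proof. by move=> th /(other_cases th) [->|//]; rewrite eqxx. Qed.

Lemma otherK t h : r t h -> other t (other t h) = h.
Proof.
move=> th; apply/esym/other_eq; rewrite ?other_rel //.
by rewrite eq_sym other_neq.
Qed.

Lemma other_perm (g : {perm T}) t h : {mono g : u v / r u v} -> r t h ->
  g (other t h) = other (g t) (g h).
Proof.
move=> rg th; apply: other_eq; rewrite ?rg ?other_rel //.
by rewrite (inj_eq (@perm_inj _ g)) other_neq.
Qed.
End OtherNeighbour.

Section HalfArcTransitive.
Variables (T : finType) (e : rel T) (G : {group {perm T}}) (x0 y0 : T).
Hypotheses (e_sym : symmetric e) (e_tetra : tetravalent e)
  (autG : is_aut_group e G) (hatG : half_arc_transitive e G) (e_x0y0 : e x0 y0).
Local Notation O := (arc_orbit G x0 y0).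
Local Open Scope group_scope.

Lemma arc_orbitP u v : reflect (exists2 g, g \in G & g x0 = u /\ g y0 = v) (O u v).
Proof.
apply: (iffP existsP) => [[g /andP [gG /andP [/eqP <- /eqP <-]]]|[g gG [<- <-]]].
  by exists g.
by exists g; rewrite gG !eqxx.
Qed.

Lemma arc_orbit_perm g : g \in G -> {mono g : u v / O u v}.
Proof.
move=> gG u v; apply/arc_orbitP/arc_orbitP => [[h hG [hu hv]]|[h hG [<- <-]]].
  by exists (h * g^-1); rewrite ?groupM ?groupV // !permM hu hv !permK.
by exists (h * g); rewrite ?groupM // !permM.
Qed.

Lemma arc_orbit_trans u v u' v' : O u v -> O u' v' ->
  exists2 g, g \in G & g u = u' /\ g v = v'.
Proof.
move=> /arc_orbitP [a aG [<- <-]] /arc_orbitP [b bG [<- <-]].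
by exists (a^-1 * b); rewrite ?groupM ?groupV // !permM !permK.
Qed.

Lemma arc_orbit_edge u v : e u v = O u v || O v u.
Proof.
have O_x0y0 : O x0 y0 by apply/arc_orbitP; exists 1; rewrite ?group1 ?perm1.
apply/idP/idP.
  case: hatG => _ etrans _ /(etrans _ _ _ _ e_x0y0) [g gG].
  by case/set2_eq_cases => [[<- <-]|[<- <-]]; rewrite !(arc_orbit_perm gG) O_x0y0 ?orbT.
have O_e a b : O a b -> e a b by case/arc_orbitP => g gG [<- <-]; rewrite autG.
by case/orP => /O_e //; rewrite e_sym.
Qed.

Lemma arc_orbit_asym u v : O u v -> ~~ O v u.
Proof.
move=> uv; apply/negP => vu; case: hatG => _ _; apply.
have /arc_orbitP [h hG [hx hy]] := uv.
have O_y0x0 : O y0 x0 by rewrite -(arc_orbit_perm hG) hx hy.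
have O_sym a b : O a b -> O b a by case/arc_orbitP => g gG [<- <-]; rewrite arc_orbit_perm.
have O_of_edge a b : O a b || O b a -> O a b by case/orP => // /O_sym.
move=> x y x' y'; rewrite !arc_orbit_edge => /O_of_edge xy /O_of_edge x'y'.
exact: arc_orbit_trans.
Qed.

Lemma arc_orbit_degree_sum v : #|[set w | O v w]| + #|[set u | O u v]| = 4.
Proof.
rewrite -cardsUI -(e_tetra v).
have -> : [set w | O v w] :&: [set u | O u v] = set0.
  by apply/setP => w; rewrite !inE; case: (boolP (O v w)) => // /arc_orbit_asym /negbTE.
by rewrite cards0 addn0; apply: eq_card => w; rewrite !inE arc_orbit_edge.
Qed.

Lemma arc_orbit_out_degree v : #|[set w | O v w]| = 2.
Proof.
have const (r : rel T) : (forall g, g \in G -> {mono g : a b / r a b}) ->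
    forall x, #|[set y | r x y]| = #|[set y | r x0 y]|.
  move=> r_perm x; case: hatG => /(_ x0 x) [g gG <-] _ _.
  exact: card_rel_perm (r_perm g gG).
have out_const := const _ arc_orbit_perm.
have in_const := const (fun a b => O b a) (fun g gG a b => arc_orbit_perm gG b a).
rewrite out_const; have := arc_orbit_degree_sum x0.
by rewrite -(card_out_eq_in out_const in_const) addnn => /(congr1 half); rewrite doubleK.
Qed.

Lemma arc_orbit_in_degree v : #|[set u | O u v]| = 2.
Proof. by have := arc_orbit_degree_sum v; rewrite arc_orbit_out_degree => /addnI. Qed.
End HalfArcTransitive.

Section AlternatingCycles.
Variables (T : finType) (e O : rel T) (G : {group {perm T}}).
Hypotheses (edgeE : forall u v, e u v = O u v || O v u)
  (O_asym : forall u v, O u v -> ~~ O v u)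
  (out_degree : forall v, #|[set w | O v w]| = 2)
  (in_degree : forall v, #|[set u | O u v]| = 2)
  (O_perm : forall g, g \in G -> {mono g : u v / O u v})
  (O_trans : forall u v u' v', O u v -> O u' v' ->
     exists2 g, g \in G & g u = u' /\ g v = v').

Local Notation O' := (fun u v => O v u).

Lemma e_sym : symmetric e.
Proof. by move=> u v; rewrite !edgeE orbC. Qed.

Lemma e_perm g : g \in G -> {mono g : u v / e u v}.
Proof. by move=> gG u v; rewrite !edgeE !O_perm. Qed.

Lemma O_neq u v : O u v -> u != v.
Proof. by move=> uv; apply: contraNneq (O_asym uv) => Euv; rewrite Euv in uv *. Qed.

Lemma exists_out v : exists w, O v w.
Proof.
have /card_gt0P [w] : 0 < #|[set w | O v w]| by rewrite out_degree.
by rewrite inE; exists w.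
Qed.

Lemma exists_in v : exists u, O u v.
Proof.
have /card_gt0P [u] : 0 < #|[set u | O u v]| by rewrite in_degree.
by rewrite inE; exists u.
Qed.

Lemma vertex_trans u v : exists2 g, g \in G & g u = v.
Proof.
have [[u' uu'] [v' vv']] := (exists_out u, exists_out v).
by have [g gG [gu _]] := O_trans uu' vv'; exists g.
Qed.

Definition arc := {p : T * T | O p.1 p.2}.
Definition tl (c : arc) := (val c).1.
Definition hd (c : arc) := (val c).2.
Definition edge (c : arc) := [set tl c; hd c].

Lemma arcP c : O (tl c) (hd c).
Proof. exact: valP c. Qed.

Lemma arc_inj c c' : tl c = tl c' -> hd c = hd c' -> c = c'.
Proof. by move=> Etl Ehd; apply/val_inj/injective_projections. Qed.

Lemma edge_inj : injective edge.
Proof.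
move=> c c' /set2_eq_cases [[]|[Etl Ehd]]; first exact: arc_inj.
by have := arcP c'; rewrite -Etl -Ehd => /O_asym; rewrite arcP.
Qed.

Definition out_twin c : arc :=
  Sub (tl c, other O (tl c) (hd c)) (other_rel out_degree (arcP c)).
Definition in_twin c : arc :=
  Sub (other O' (hd c) (tl c), hd c) (other_rel in_degree (arcP c)).
(* The alternating cycle through [c] is traversed as tl c, hd c,
   tl (alt_next c), hd (alt_next c), ...: [in_twin c] shares its head with [c]
   and its tail with [alt_next c]. *)
Definition alt_next c := out_twin (in_twin c).

Lemma tl_out_twin c : tl (out_twin c) = tl c. Proof. by []. Qed.
Lemma hd_out_twin c : hd (out_twin c) = other O (tl c) (hd c). Proof. by []. Qed.
Lemma tl_in_twin c : tl (in_twin c) = other O' (hd c) (tl c). Proof. by []. Qed.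
Lemma hd_in_twin c : hd (in_twin c) = hd c. Proof. by []. Qed.

Lemma out_twinK : involutive out_twin.
Proof. by move=> c; apply: arc_inj => //; exact: (otherK out_degree (arcP c)). Qed.

Lemma in_twinK : involutive in_twin.
Proof. by move=> c; apply: arc_inj => //; exact: (otherK in_degree (arcP c)). Qed.

Lemma out_twin_neq c : out_twin c != c.
Proof. by apply: contraNneq (other_neq out_degree (arcP c)) => /(congr1 hd)/eqP. Qed.

Lemma in_twin_neq c : in_twin c != c.
Proof. by apply: contraNneq (other_neq in_degree (arcP c)) => /(congr1 tl)/eqP. Qed.

Lemma same_tl c c' : tl c' = tl c -> c' = c \/ c' = out_twin c.
Proof.
move=> Etl; have := arcP c'; rewrite Etl => /(other_cases out_degree (arcP c)).
by case=> Ehd; [left | right]; apply: arc_inj.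
Qed.

Lemma same_hd c c' : hd c' = hd c -> c' = c \/ c' = in_twin c.
Proof.
move=> Ehd; have := arcP c'; rewrite Ehd => /(other_cases in_degree (arcP c)).
by case=> Etl; [left | right]; apply: arc_inj.
Qed.

Lemma alt_next_inj : injective alt_next.
Proof. by apply: (can_inj (g := in_twin \o out_twin)) => c; rewrite /= out_twinK in_twinK. Qed.

Lemma O_tl_alt_next c : O (tl (alt_next c)) (hd c).
Proof. exact: arcP (in_twin c). Qed.

(* Only meaningful for [g \in G]; otherwise it may default to [c]. *)
Definition act_arc (g : {perm T}) c : arc := insubd c (g (tl c), g (hd c)).

Lemma act_arc_tl g c : g \in G -> tl (act_arc g c) = g (tl c).
Proof. by move=> gG; rewrite /tl val_insubd /= O_perm ?arcP. Qed.

Lemma act_arc_hd g c : g \in G -> hd (act_arc g c) = g (hd c).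
Proof. by move=> gG; rewrite /hd val_insubd /= O_perm ?arcP. Qed.

Lemma act_arc_out_twin g c : g \in G -> act_arc g (out_twin c) = out_twin (act_arc g c).
Proof.
move=> gG; apply: arc_inj; first by rewrite !(act_arc_tl, tl_out_twin).
rewrite !(act_arc_hd, hd_out_twin) //.
by rewrite (other_perm out_degree (O_perm gG) (arcP c)) act_arc_tl.
Qed.

Lemma act_arc_in_twin g c : g \in G -> act_arc g (in_twin c) = in_twin (act_arc g c).
Proof.
move=> gG; have O'_perm : {mono g : u v / O' u v} by move=> u v; apply: O_perm.
apply: arc_inj; last by rewrite !(act_arc_hd, hd_in_twin).
rewrite !(act_arc_tl, tl_in_twin) //.
by rewrite (other_perm in_degree O'_perm (arcP c)) act_arc_hd.
Qed.

Lemma act_arc_alt_next g c : g \in G -> act_arc g (alt_next c) = alt_next (act_arc g c).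
Proof. by move=> gG; rewrite act_arc_out_twin ?act_arc_in_twin. Qed.

Lemma act_arc_iter g c n : g \in G ->
  act_arc g (iter n alt_next c) = iter n alt_next (act_arc g c).
Proof. by move=> gG; elim: n => //= n <-; rewrite act_arc_alt_next. Qed.

Lemma arc_trans c c' : exists2 g, g \in G & act_arc g c = c'.
Proof.
have [g gG [Etl Ehd]] := O_trans (arcP c) (arcP c').
by exists g => //; apply: arc_inj; rewrite ?act_arc_tl ?act_arc_hd.
Qed.

Lemma alt_next_in_twin_alt_next c : alt_next (in_twin (alt_next c)) = in_twin c.
Proof. by rewrite /alt_next in_twinK out_twinK. Qed.

Lemma iter_alt_next_in_twin n c :
  iter n alt_next (in_twin (iter n alt_next c)) = in_twin c.
Proof.
by elim: n c => // n IH c; rewrite iterSr iterS alt_next_in_twin_alt_next IH.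
Qed.

Lemma iter_alt_next_neq_out_twin n c : iter n alt_next c != out_twin c.
Proof.
elim/ltn_ind: n c => n IH c; case: n IH => [|[|n]] IH /=.
- by rewrite eq_sym out_twin_neq.
- by rewrite (inj_eq (can_inj out_twinK)) in_twin_neq.
- apply/eqP => E; have : iter n.+1 alt_next c = in_twin c.
    by apply: alt_next_inj; apply: etrans E _; rewrite /alt_next in_twinK.
  rewrite iterSr -[in_twin c]out_twinK; apply/eqP; exact: IH.
Qed.

Lemma iter_alt_next_neq_in_twin n c : iter n alt_next c != in_twin c.
Proof.
apply: contra (iter_alt_next_neq_out_twin n.+1 c) => /eqP E.
by rewrite iterS E /alt_next in_twinK.
Qed.

Lemma hd_iter_alt_next_neq_tl n c : hd (iter n alt_next c) != tl c.
Proof.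
(* By arc-transitivity the equality would hold for every arc, in particular
   for [d], whose walk of length [n] ends at [in_twin c]; this makes [d] the
   reversal of [c]. *)
apply/eqP => Q.
have Qall b : hd (iter n alt_next b) = tl b.
  by have [g gG <-] := arc_trans c b; rewrite -act_arc_iter // act_arc_hd // Q act_arc_tl.
pose d := in_twin (iter n alt_next c).
have Ehd : hd d = tl c by rewrite hd_in_twin.
have Etl : tl d = hd c by rewrite -Qall iter_alt_next_in_twin hd_in_twin.
by have := arcP d; rewrite Ehd Etl => /O_asym; rewrite arcP.
Qed.

Definition alt_orbit c := orbit alt_next c.
Definition alt_tails c := map tl (alt_orbit c).
Definition alt_heads c := map hd (alt_orbit c).
Definition alt_seq c := interleave tl hd (alt_orbit c).
Definition alt_edges c := cycle_edges (alt_seq c).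

Lemma alt_orbit_iter c b b' : b \in alt_orbit c -> b' \in alt_orbit c ->
  exists n, b' = iter n alt_next b.
Proof.
rewrite /alt_orbit -!fconnect_orbit => cb cb'.
have bb' : fconnect alt_next b b'.
  by rewrite (fconnect_sym alt_next_inj) in cb; apply: connect_trans cb cb'.
by exists (findex alt_next b b'); rewrite iter_findex.
Qed.

Lemma alt_orbit_tl_inj c : {in alt_orbit c &, injective tl}.
Proof.
move=> b b' cb cb' /esym /same_tl [//|Eb']; have [n En] := alt_orbit_iter cb cb'.
by move: (iter_alt_next_neq_out_twin n b); rewrite -En Eb' eqxx.
Qed.

Lemma alt_orbit_hd_inj c : {in alt_orbit c &, injective hd}.
Proof.
move=> b b' cb cb' /esym /same_hd [//|Eb']; have [n En] := alt_orbit_iter cb cb'.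
by move: (iter_alt_next_neq_in_twin n b); rewrite -En Eb' eqxx.
Qed.

Lemma alt_orbit_tl_neq_hd c : {in alt_orbit c &, forall b b', tl b != hd b'}.
Proof.
move=> b b' cb cb'; have [n ->] := alt_orbit_iter cb cb'.
by rewrite eq_sym hd_iter_alt_next_neq_tl.
Qed.

Lemma alt_tails_heads c x : x \in alt_tails c -> x \notin alt_heads c.
Proof.
case/mapP => b cb ->; apply/mapP => -[b' cb'] /eqP.
by rewrite (negbTE (alt_orbit_tl_neq_hd cb cb')).
Qed.

Lemma mem_alt_seq c x : (x \in alt_seq c) = (x \in alt_tails c) || (x \in alt_heads c).
Proof.
rewrite mem_interleave has_predU.
by congr orb; apply/hasP/mapP => -[b cb /eqP]; exists b.
Qed.

Lemma alt_seq_uniq c : uniq (alt_seq c).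
Proof.
apply: interleave_uniq; [exact: orbit_uniq | exact: alt_orbit_tl_inj |
  exact: alt_orbit_hd_inj | exact: alt_orbit_tl_neq_hd].
Qed.

Lemma alt_tails_uniq c : uniq (alt_tails c).
Proof. by rewrite map_inj_in_uniq ?orbit_uniq //; apply: alt_orbit_tl_inj. Qed.

Lemma alt_next_neq c : alt_next c != c.
Proof. by apply: contraNneq (other_neq in_degree (arcP c)) => /(congr1 tl)/eqP. Qed.

Lemma size_alt_seq c : 3 <= size (alt_seq c).
Proof.
rewrite size_interleave -addnn.
suff two : 2 <= size (alt_orbit c) by apply: leq_trans (leq_add two two).
have -> : 2 = size [:: c; alt_next c] by [].
apply: uniq_leq_size; first by rewrite /= inE eq_sym alt_next_neq.
by move=> b; rewrite !inE => /orP [] /eqP ->; [exact: in_orbit | exact/mem_orbit/in_orbit].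
Qed.

Definition alt_step c : rel T := fun x y =>
  has (fun b => (x == tl b) && (y == hd b) || (x == hd b) && (y == tl (alt_next b)))
    (alt_orbit c).

Lemma alt_seq_step c : path.cycle (alt_step c) (alt_seq c).
Proof.
apply: (@cycle_interleave _ _ _ _ (frel alt_next)); last exact: (cycle_orbit alt_next_inj c).
- by move=> b cb; apply/hasP; exists b; rewrite ?eqxx.
- by move=> b b' cb /eqP <-; apply/hasP; exists b; rewrite ?eqxx ?orbT.
Qed.

Lemma alt_stepP c x y : alt_step c x y ->
  [&& x \in alt_tails c, y \in alt_heads c & O x y] ||
  [&& y \in alt_tails c, x \in alt_heads c & O y x].
Proof.
case/hasP => b cb /orP [] /andP [/eqP -> /eqP ->].
  by rewrite (map_f tl cb) (map_f hd cb) arcP.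
have cb' : alt_next b \in alt_orbit c by apply: mem_orbit.
by rewrite (map_f tl cb') (map_f hd cb) O_tl_alt_next orbT.
Qed.

Lemma alt_cycle_alt_edges c : alt_cycle e O (alt_edges c).
Proof.
have cs := alt_seq_step c.
exists (alt_seq c); split; [exact: alt_seq_uniq | exact: size_alt_seq | | | by []].
  by apply: sub_cycle cs => x y /alt_stepP /orP [] /and3P [_ _ Oxy]; rewrite edgeE Oxy ?orbT.
apply/allP => x xs; have := alt_stepP (prev_cycle cs xs).
move: (alt_stepP (next_cycle cs xs)) => /orP [/and3P [xt _ xn] | /and3P [_ xh nx]].
  case/orP => [/and3P [_ xh _] | /and3P [_ _ xp]]; last by rewrite xn xp orbT.
  by rewrite (negbTE (alt_tails_heads xt)) in xh.
case/orP => [/and3P [_ _ px] | /and3P [xt _ _]]; first by rewrite px nx.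
by rewrite (negbTE (alt_tails_heads xt)) in xh.
Qed.

Lemma alt_edgesP c E : E \in alt_edges c ->
  exists2 b, b \in alt_orbit c & E = edge b \/ E = edge (in_twin b).
Proof.
case/mem_cycle_edges => x xs ->; case/hasP: (next_cycle (alt_seq_step c) xs) => b cb.
case/orP => /andP [/eqP -> /eqP ->]; exists b => //; first by left.
by right; rewrite /edge hd_in_twin setUC.
Qed.

Lemma edge_alt_edges c : edge c \in alt_edges c.
Proof.
have [s Es] : exists s, alt_orbit c = c :: s.
  by rewrite /alt_orbit /orbit -orderSpred; eexists.
have tl_seq : tl c \in alt_seq c by rewrite mem_alt_seq /alt_tails Es mem_head.
have next_tl : next (alt_seq c) (tl c) = hd c.
  by rewrite /alt_seq Es /interleave /= eqxx.
by rewrite /edge -next_tl cycle_edges_next.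
Qed.

Lemma alt_cycle_twin_edges C c : alt_cycle e O C -> edge c \in C ->
  edge (out_twin c) \in C /\ edge (in_twin c) \in C.
Proof.
move=> [s [us ss _ alt ->]] ec; have not_hd_tl := negbTE (O_asym (arcP c)).
split.
  have [w wh [ew]] := alternating_other_neighbour us ss alt ec.
  rewrite not_hd_tl arcP /= => tw.
  by rewrite /edge tl_out_twin hd_out_twin -(other_eq out_degree (arcP c) tw wh).
have ec' : [set hd c; tl c] \in cycle_edges s by rewrite setUC.
have [w wt [ew]] := alternating_other_neighbour us ss alt ec'.
rewrite not_hd_tl arcP orbF => wh.
by rewrite /edge tl_in_twin hd_in_twin -(other_eq in_degree (arcP c) wh wt) setUC.
Qed.

Lemma alt_edges_sub C c : alt_cycle e O C -> edge c \in C -> alt_edges c \subset C.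
Proof.
move=> altC ec.
have iter_in n : edge (iter n alt_next c) \in C.
  by elim: n => //= n /(alt_cycle_twin_edges altC) [_ /(alt_cycle_twin_edges altC) []].
apply/subsetP => E /alt_edgesP [b cb]; have [n ->] := alt_orbit_iter (in_orbit _ c) cb.
by case=> ->; [exact: iter_in | exact: (alt_cycle_twin_edges altC (iter_in n)).2].
Qed.

Section Radius3.
Hypothesis rad3 : forall C, alt_cycle e O C -> #|C| = 6.

Lemma alt_cycle_eq C c : alt_cycle e O C -> edge c \in C -> C = alt_edges c.
Proof.
move=> altC ec; apply/esym/eqP; rewrite eqEcard alt_edges_sub //.
by rewrite (rad3 altC) (rad3 (alt_cycle_alt_edges c)).
Qed.

Lemma alt_edges_out_twin c : alt_edges (out_twin c) = alt_edges c.
Proof.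
apply/esym/alt_cycle_eq; first exact: alt_cycle_alt_edges.
by case: (alt_cycle_twin_edges (alt_cycle_alt_edges c) (edge_alt_edges c)).
Qed.

Lemma alt_edges_in_twin c : alt_edges (in_twin c) = alt_edges c.
Proof.
apply/esym/alt_cycle_eq; first exact: alt_cycle_alt_edges.
by case: (alt_cycle_twin_edges (alt_cycle_alt_edges c) (edge_alt_edges c)).
Qed.

Lemma alt_edges_orbit c b : b \in alt_orbit c -> alt_edges b = alt_edges c.
Proof.
move=> cb; have [n ->] := alt_orbit_iter (in_orbit _ c) cb.
by elim: n => //= n <-; rewrite alt_edges_out_twin alt_edges_in_twin.
Qed.

Lemma alt_edges_same_tl c c' : tl c' = tl c -> alt_edges c' = alt_edges c.
Proof. by case/same_tl => ->; rewrite ?alt_edges_out_twin. Qed.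

Lemma alt_edges_same_hd c c' : hd c' = hd c -> alt_edges c' = alt_edges c.
Proof. by case/same_hd => ->; rewrite ?alt_edges_in_twin. Qed.

Lemma act_alt_edges g c : g \in G -> act_cycle g (alt_edges c) = alt_edges (act_arc g c).
Proof.
move=> gG; apply: alt_cycle_eq.
  exact: alt_cycle_act (e_perm gG) (O_perm gG) (alt_cycle_alt_edges c).
apply/imsetP; exists (edge c); first exact: edge_alt_edges.
by rewrite /edge imsetU1 imset_set1 act_arc_tl ?act_arc_hd.
Qed.

Lemma size_alt_orbit c : size (alt_orbit c) = 3.
Proof.
have := rad3 (alt_cycle_alt_edges c).
rewrite card_cycle_edges ?alt_seq_uniq ?size_alt_seq // /alt_seq size_interleave.
by move/(congr1 half); rewrite doubleK.
Qed.

Lemma alt_orbit3 c : alt_orbit c = [:: c; alt_next c; alt_next (alt_next c)].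
Proof. by rewrite /alt_orbit /orbit -size_orbit -/(alt_orbit c) size_alt_orbit. Qed.

Lemma alt_next3 c : alt_next (alt_next (alt_next c)) = c.
Proof.
by have := iter_order alt_next_inj c; rewrite -size_orbit -/(alt_orbit c) size_alt_orbit.
Qed.

Lemma exists_out_arc v : exists c : arc, tl c == v.
Proof. by have [w vw] := exists_out v; exists (Sub (v, w) vw). Qed.

Lemma exists_in_arc v : exists c : arc, hd c == v.
Proof. by have [u uv] := exists_in v; exists (Sub (u, v) uv). Qed.

Definition out_arc v := xchoose (exists_out_arc v).
Definition in_arc v := xchoose (exists_in_arc v).
Definition cyc_out v := alt_edges (out_arc v).
Definition cyc_in v := alt_edges (in_arc v).

Lemma tl_out_arc v : tl (out_arc v) = v.
Proof. exact/eqP/(xchooseP (exists_out_arc v)). Qed.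

Lemma hd_in_arc v : hd (in_arc v) = v.
Proof. exact/eqP/(xchooseP (exists_in_arc v)). Qed.

Lemma cyc_out_tl c : cyc_out (tl c) = alt_edges c.
Proof. by apply: alt_edges_same_tl; rewrite tl_out_arc. Qed.

Lemma cyc_in_hd c : cyc_in (hd c) = alt_edges c.
Proof. by apply: alt_edges_same_hd; rewrite hd_in_arc. Qed.

Lemma O_cyc_out_in u v : O u v -> cyc_out u = cyc_in v.
Proof.
move=> uv; pose c : arc := Sub (u, v) uv.
by rewrite -[u]/(tl c) -[v]/(hd c) cyc_out_tl cyc_in_hd.
Qed.

Lemma alt_cycle_cyc_out v : alt_cycle e O (cyc_out v).
Proof. exact: alt_cycle_alt_edges. Qed.

Lemma alt_cycle_cyc_in v : alt_cycle e O (cyc_in v).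
Proof. exact: alt_cycle_alt_edges. Qed.

Lemma mem_alt_verts c x :
  (x \in cycle_verts (alt_edges c)) = (x \in alt_tails c) || (x \in alt_heads c).
Proof. by rewrite cover_cycle_edges inE mem_alt_seq. Qed.

Lemma alt_edges_arc c c' : edge c' \in alt_edges c ->
  tl c' \in alt_tails c /\ hd c' \in alt_heads c.
Proof.
case/alt_edgesP => b cb [] /edge_inj ->; split; rewrite ?hd_in_twin; try exact: map_f.
have cb' : alt_next b \in alt_orbit c by apply: mem_orbit.
exact: (map_f tl cb').
Qed.

Lemma cyc_outE v c : (cyc_out v == alt_edges c) = (v \in alt_tails c).
Proof.
apply/eqP/idP => [Ev | /mapP [b cb ->]].
  have := edge_alt_edges (out_arc v); rewrite -/(cyc_out v) Ev.
  by case/alt_edges_arc; rewrite tl_out_arc.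
by rewrite cyc_out_tl (alt_edges_orbit cb).
Qed.

Lemma cyc_inE v c : (cyc_in v == alt_edges c) = (v \in alt_heads c).
Proof.
apply/eqP/idP => [Ev | /mapP [b cb ->]].
  have := edge_alt_edges (in_arc v); rewrite -/(cyc_in v) Ev.
  by case/alt_edges_arc; rewrite hd_in_arc.
by rewrite cyc_in_hd (alt_edges_orbit cb).
Qed.

Lemma mem_cyc_out v : v \in cycle_verts (cyc_out v).
Proof. by have := eqxx (cyc_out v); rewrite {2}/cyc_out cyc_outE mem_alt_verts => ->. Qed.

Lemma mem_cyc_in v : v \in cycle_verts (cyc_in v).
Proof.
by have := eqxx (cyc_in v); rewrite {2}/cyc_in cyc_inE mem_alt_verts => ->; rewrite orbT.
Qed.

Lemma cyc_out_neq_in v : cyc_out v != cyc_in v.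
Proof.
apply/eqP => E; have vt : v \in alt_tails (out_arc v) by rewrite -cyc_outE.
have vh : v \in alt_heads (out_arc v) by rewrite -cyc_inE -E.
by rewrite (negbTE (alt_tails_heads vt)) in vh.
Qed.

Lemma alt_cycle_cases C x : alt_cycle e O C -> x \in cycle_verts C ->
  C = cyc_out x \/ C = cyc_in x.
Proof.
move=> altC /(alt_cycle_vertex_edge e_sym altC) [y].
rewrite edgeE => /orP [xy|yx] Exy.
  left; pose c : arc := Sub (x, y) xy.
  by rewrite -[x]/(tl c) cyc_out_tl; apply: alt_cycle_eq.
right; pose c : arc := Sub (y, x) yx.
by rewrite -[x]/(hd c) cyc_in_hd; apply: alt_cycle_eq; rewrite // /edge setUC.
Qed.

Lemma cyc_out_perm g v : g \in G -> cyc_out (g v) = act_cycle g (cyc_out v).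
Proof. by move=> gG; rewrite act_alt_edges // -cyc_out_tl act_arc_tl // tl_out_arc. Qed.

Lemma cyc_in_perm g v : g \in G -> cyc_in (g v) = act_cycle g (cyc_in v).
Proof. by move=> gG; rewrite act_alt_edges // -cyc_in_hd act_arc_hd // hd_in_arc. Qed.

Section Attachment2.
Hypothesis att2 : forall C D, alt_cycle e O C -> alt_cycle e O D -> C != D ->
  cycle_verts C :&: cycle_verts D != set0 -> #|cycle_verts C :&: cycle_verts D| = 2.

Definition attach v := cycle_verts (cyc_out v) :&: cycle_verts (cyc_in v).

Lemma mem_attach v : v \in attach v.
Proof. by rewrite inE mem_cyc_out mem_cyc_in. Qed.

Lemma card_attach v : #|attach v| = 2.
Proof.
apply: att2; [exact: alt_cycle_cyc_out | exact: alt_cycle_cyc_in |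
  exact: cyc_out_neq_in | by apply/set0Pn; exists v; apply: mem_attach].
Qed.

Lemma attach_other v w : w \in attach v -> w != v -> attach v = [set v; w].
Proof.
move=> wa wv; have [b bv Eb] := card2_other (card_attach v) (mem_attach v).
by move: wa; rewrite Eb => /set2P [wE|->]; first by rewrite wE eqxx in wv.
Qed.

Lemma attach_perm g v : g \in G -> attach (g v) = g @: attach v.
Proof.
move=> gG; rewrite /attach cyc_out_perm // cyc_in_perm // !cycle_verts_act imsetI //.
by move=> x y _ _; apply: perm_inj.
Qed.

Lemma attach_cases v w : w \in attach v ->
  cyc_out w = cyc_out v /\ cyc_in w = cyc_in v \/
  cyc_out w = cyc_in v /\ cyc_in w = cyc_out v.
Proof.
have nv := cyc_out_neq_in v.
case/setIP => /(alt_cycle_cases (alt_cycle_cyc_out v)) [] Eo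
  /(alt_cycle_cases (alt_cycle_cyc_in v)) [] Ei; try by [left | right].
  by rewrite Eo Ei eqxx in nv.
by rewrite Eo Ei eqxx in nv.
Qed.

Lemma attach_not_out v w : w \in attach v -> ~~ O v w.
Proof.
(* Otherwise [attach w = attach v], so an element of [G] mapping [v] to [w]
   swaps [v] and [w] and reverses the arc [(v, w)]. *)
move=> wa; apply/negP => vw; have wv : w != v by rewrite eq_sym O_neq.
have Ein : cyc_in w = cyc_out v by rewrite (O_cyc_out_in vw).
have Eout : cyc_out w = cyc_in v.
  case: (attach_cases wa) => [[_ Ei] | [] //].
  by move: (cyc_out_neq_in v); rewrite -Ein Ei eqxx.
have [g gG gv] := vertex_trans v w.
have := attach_perm v gG; rewrite gv (attach_other wa wv).
have -> : attach w = [set v; w] by rewrite -(attach_other wa wv) /attach Ein Eout setIC.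
rewrite imsetU1 imset_set1 gv => /set2_eq_cases [[vw' _] | [vgw _]].
  by rewrite vw' eqxx in wv.
by have := O_asym vw; rewrite -(O_perm gG) gv -vgw vw.
Qed.

Lemma same_cycles_eq v w : cyc_out w = cyc_out v -> cyc_in w = cyc_in v -> w = v.
Proof.
(* Otherwise map [v] to the third tail [u] of [cyc_out v] by some [g \in G]:
   [g w] is a tail of [cyc_out v] other than [u] lying in [attach u], which
   forces [cyc_in u = cyc_in v] and puts [v], [w], [u] into [attach v]. *)
move=> Eo Ei; case: (eqVneq w v) => // wv; exfalso.
pose c := out_arc v; pose tails := [set x in alt_tails c].
have tailsP x : (x \in tails) = (cyc_out x == cyc_out v) by rewrite inE -cyc_outE.
have card_tails : #|tails| = 3.
  by rewrite cardsE (card_uniqP (alt_tails_uniq c)) size_map size_alt_orbit.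
have vt : v \in tails by rewrite tailsP.
have wt : w \in tails by rewrite tailsP Eo.
have [u uvw Eu] := card3_third card_tails vt wt wv.
have /eqP Eou : cyc_out u == cyc_out v by rewrite -tailsP Eu setU11.
have wa : w \in attach v by rewrite inE -Eo -Ei mem_cyc_out mem_cyc_in.
have [g gG gv] := vertex_trans v u.
have gwa : g w \in attach u by rewrite -gv attach_perm // imset_f.
have Eogw : cyc_out (g w) = cyc_out u by rewrite cyc_out_perm // Eo -cyc_out_perm // gv.
have : g w \in tails by rewrite tailsP Eogw Eou.
rewrite Eu in_setU1 -{1}gv (inj_eq (@perm_inj _ g)) (negbTE wv) /=.
move=> gw_vw; have Eigw : cyc_in (g w) = cyc_in v by case/set2P: gw_vw => ->.
have Eiu : cyc_in u = cyc_in v.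
  case: (attach_cases gwa) => [[_ <-] // | [Eo' _]].
  by move: (cyc_out_neq_in u); rewrite -Eo' Eogw eqxx.
by move: uvw; rewrite -(attach_other wa wv) inE -Eou -Eiu mem_cyc_out mem_cyc_in.
Qed.

Lemma attach_swap v w : w \in attach v -> w != v ->
  cyc_out w = cyc_in v /\ cyc_in w = cyc_out v.
Proof.
move=> wa wv; case: (attach_cases wa) => // -[Eo Ei].
by rewrite (same_cycles_eq Eo Ei) eqxx in wv.
Qed.

Lemma attach_alt_next c : hd (alt_next c) \in attach (tl c).
Proof.
have [w wv Ev] := card2_other (card_attach (tl c)) (mem_attach (tl c)).
have wa : w \in attach (tl c) by rewrite Ev set22.
have [Eo _] := attach_swap wa wv; have not_out := attach_not_out wa.
have wh : w \in alt_heads c.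
  have /setIP [] := wa; rewrite cyc_out_tl mem_alt_verts => /orP [wt _|//].
  have /eqP Ew : cyc_out w == alt_edges c by rewrite cyc_outE.
  by move: (cyc_out_neq_in (tl c)); rewrite -Eo Ew cyc_out_tl eqxx.
rewrite /alt_heads alt_orbit3 !inE in wh; case/or3P: wh => /eqP wE.
- by move: not_out; rewrite wE arcP.
- by rewrite -wE.
- by move: not_out; rewrite wE -{1}(alt_next3 c) O_tl_alt_next.
Qed.

Lemma O_cyclesE u v : O u v = (cyc_out u == cyc_in v) && (cyc_out v != cyc_in u).
Proof.
apply/idP/andP => [uv | [/eqP Euv Evu]].
  rewrite (O_cyc_out_in uv) eqxx; split => //; apply/eqP => Evu.
  have va : v \in attach u by rewrite inE (O_cyc_out_in uv) -Evu mem_cyc_in mem_cyc_out.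
  by move: (attach_not_out va); rewrite uv.
pose c := out_arc u; have tlc : tl c = u := tl_out_arc u.
have : v \in alt_heads c by rewrite -cyc_inE -Euv.
rewrite /alt_heads alt_orbit3 !inE => /or3P [] /eqP vE; subst v.
- by rewrite -{1}tlc arcP.
- have va := attach_alt_next c; rewrite tlc in va.
  have vu : hd (alt_next c) != u.
    by apply: contraNneq (cyc_out_neq_in u) => vu; rewrite Euv vu.
  by rewrite (attach_swap va vu).1 eqxx in Evu.
- by rewrite -tlc -{1}(alt_next3 c) O_tl_alt_next.
Qed.

Lemma adjacent_cycles C D : alt_cycle e O C -> alt_cycle e O D -> alt_adj C D ->
  exists v, cyc_out v = C /\ cyc_in v = D.
Proof.
move=> altC altD /andP [CD /set0Pn [v /setIP [vC vD]]].
move: CD; case: (alt_cycle_cases altC vC) (alt_cycle_cases altD vD) => [] -> [] ->;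
  rewrite ?eqxx // => _; first by exists v.
have [w wv Ev] := card2_other (card_attach v) (mem_attach v).
have wa : w \in attach v by rewrite Ev set22.
by have [Eo Ei] := attach_swap wa wv; exists w.
Qed.

Definition alt_out v : AltV e O := Sub (cyc_out v) (asboolT (alt_cycle_cyc_out v)).
Definition alt_in v : AltV e O := Sub (cyc_in v) (asboolT (alt_cycle_cyc_in v)).

Lemma alt_out_in_adj v : alt_rel e O (alt_out v) (alt_in v).
Proof.
by rewrite /alt_rel /alt_adj /= cyc_out_neq_in; apply/set0Pn; exists v; apply: mem_attach.
Qed.

Definition dart_of v : DartV (alt_rel e O) := Sub (alt_out v, alt_in v) (alt_out_in_adj v).

Lemma dart_of_inj : injective dart_of.
Proof.
move=> u v /(congr1 val) /= [Eo Ei].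
exact: same_cycles_eq Eo Ei.
Qed.

Lemma dart_of_surj a : exists v, dart_of v == a.
Proof.
case: a => -[[C altC] [D altD]] CD.
have [v [Eo Ei]] := adjacent_cycles (asboolW altC) (asboolW altD) CD.
by exists v; apply/eqP/val_inj; congr pair; apply: val_inj.
Qed.

Definition vertex_of a := xchoose (dart_of_surj a).

Lemma vertex_ofK : cancel vertex_of dart_of.
Proof. by move=> a; apply/eqP/(xchooseP (dart_of_surj a)). Qed.

Lemma dart_ofK : cancel dart_of vertex_of.
Proof. by move=> v; apply: dart_of_inj; rewrite vertex_ofK. Qed.

Lemma alt_out_in_eq u v : (alt_out u == alt_in v) = (cyc_out u == cyc_in v).
Proof. by rewrite -val_eqE /=. Qed.

Lemma dart_arc_of u v : dart_arc (dart_of u) (dart_of v) = O v u.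
Proof. by rewrite /dart_arc /= !alt_out_in_eq O_cyclesE. Qed.

Lemma dart_adj_of u v : dart_adj (dart_of u) (dart_of v) = e u v.
Proof. by rewrite /dart_adj /= !alt_out_in_eq edgeE !O_cyclesE orbC. Qed.

Lemma alt_dart_iso : exists Psi : DartV (alt_rel e O) -> T,
  [/\ bijective Psi,
      (forall a b, e (Psi a) (Psi b) = dart_adj a b)
    & (forall a b, dart_arc a b -> O (Psi a) (Psi b)) \/
      (forall a b, dart_arc a b -> O (Psi b) (Psi a))].
Proof.
exists vertex_of; split; first by exists dart_of; [exact: vertex_ofK | exact: dart_ofK].
  by move=> a b; rewrite -[in RHS](vertex_ofK a) -[in RHS](vertex_ofK b) dart_adj_of.
right=> a b; rewrite -[a in dart_arc a](vertex_ofK a) -[b in dart_arc _ b](vertex_ofK b).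
by rewrite dart_arc_of.
Qed.

Lemma alt_two_arc_trans C1 C2 C3 D1 D2 D3 :
    alt_cycle e O C1 -> alt_cycle e O C2 -> alt_cycle e O C3 ->
    alt_cycle e O D1 -> alt_cycle e O D2 -> alt_cycle e O D3 ->
    alt_adj C1 C2 -> alt_adj C2 C3 -> C1 != C3 ->
    alt_adj D1 D2 -> alt_adj D2 D3 -> D1 != D3 ->
  exists2 g, g \in G &
    [/\ act_cycle g C1 = D1, act_cycle g C2 = D2 & act_cycle g C3 = D3].
Proof.
move=> C1a C2a C3a D1a D2a D3a C12 C23 C13 D12 D23 D13.
have [x [Cx1 Cx2]] := adjacent_cycles C1a C2a C12.
have [y [Cy2 Cy3]] := adjacent_cycles C2a C3a C23.
have [x' [Dx1 Dx2]] := adjacent_cycles D1a D2a D12.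
have [y' [Dy2 Dy3]] := adjacent_cycles D2a D3a D23.
have yx : O y x by rewrite O_cyclesE Cy2 Cx2 Cx1 Cy3 eqxx.
have y'x' : O y' x' by rewrite O_cyclesE Dy2 Dx2 Dx1 Dy3 eqxx.
have [g gG [gy gx]] := O_trans yx y'x'.
exists g => //; split; first by rewrite -Cx1 -Dx1 -cyc_out_perm // gx.
  by rewrite -Cx2 -Dx2 -cyc_in_perm // gx.
by rewrite -Cy3 -Dy3 -cyc_in_perm // gy.
Qed.

End Attachment2.

End Radius3.

End AlternatingCycles.

Theorem proposition2p3 (T : finType) (e : rel T) (G : {group {perm T}})
  (x0 y0 : T) :
  symmetric e -> irreflexive e ->
  connected_graph e -> tetravalent e ->
  is_aut_group e G -> half_arc_transitive e G ->
  e x0 y0 ->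
  let O := arc_orbit G x0 y0 in
  (* rad_G(Gamma) = 3 *)
  (forall C, alt_cycle e O C -> #|C| = 6) ->
  (* att_G(Gamma) = 2 *)
  (forall C D, alt_cycle e O C -> alt_cycle e O D -> C != D ->
     cycle_verts C :&: cycle_verts D != set0 ->
     #|cycle_verts C :&: cycle_verts D| = 2) ->
  [/\ (* G induces an action on Lambda = Alt_G(Gamma) *)
      (forall g C, g \in G -> alt_cycle e O C -> alt_cycle e O (act_cycle g C)),
      (* ... which is transitive on the 2-arcs of Lambda *)
      (forall C1 C2 C3 D1 D2 D3,
         alt_cycle e O C1 -> alt_cycle e O C2 -> alt_cycle e O C3 ->
         alt_cycle e O D1 -> alt_cycle e O D2 -> alt_cycle e O D3 ->
         alt_adj C1 C2 -> alt_adj C2 C3 -> C1 != C3 ->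
         alt_adj D1 D2 -> alt_adj D2 D3 -> D1 != D3 ->
         exists2 g, g \in G &
           [/\ act_cycle g C1 = D1, act_cycle g C2 = D2 & act_cycle g C3 = D3])
    & (* Dart(Lambda) is isomorphic to Gamma via an isomorphism Psi mapping
         the natural orientation to one of the two G-induced orientations *)
      exists Psi : DartV (alt_rel e O) -> T,
        [/\ bijective Psi,
            (forall a b, e (Psi a) (Psi b) = dart_adj a b)
          & (forall a b, dart_arc a b -> O (Psi a) (Psi b)) \/
            (forall a b, dart_arc a b -> O (Psi b) (Psi a))]].
Proof.
move=> e_sym _ _ e_tetra autG hatG e_x0y0 O rad3 att2.
have edgeE := arc_orbit_edge e_sym autG hatG e_x0y0.
have O_asym := arc_orbit_asym e_sym autG hatG e_x0y0.
have out_deg := arc_orbit_out_degree e_sym e_tetra autG hatG e_x0y0.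
have in_deg := arc_orbit_in_degree e_sym e_tetra autG hatG e_x0y0.
have O_perm := @arc_orbit_perm _ G x0 y0.
have O_trans := @arc_orbit_trans _ G x0 y0.
split.
- by move=> g C gG; apply: alt_cycle_act; [exact: autG | exact: O_perm].
- exact: alt_two_arc_trans edgeE O_asym out_deg in_deg O_perm O_trans rad3 att2.
- exact: alt_dart_iso edgeE O_asym out_deg in_deg O_perm O_trans rad3 att2.
Qed.
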